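(* Let $0,1,\dots,5$ be points of $\mathbb{P}^3(\mathbb{C})$ with chosen representative vectors $v_0,\dots,v_5$, and assume $[0123]\neq 0$ (so the lines $01$ and $23$ are skew). Define the vectors $$p=[0125]v_3-[0135]v_2,\qquad q=-[0124]v_3-[0234]v_1,\qquad r=[1345]v_2-[2345]v_1,$$ which represent the intersection points $23\cap 015$, $13\cap 024$, $12\cap 345$ respectively (line meets plane). Then the polynomial identity $$-[v_1v_0v_2q]\,[v_0\,p\,v_3\,r]+[p\,v_0v_2q]\,[v_0v_1v_3r] \;=\; [0123]^2\big([0125][0234][1345]-[0124][2345][0135]\big)$$ holds. Consequently, if $p,q,r$ are nonzero (i.e. the plane $015$ does not contain the line $23$, the plane $024$ does not contain the line $13$, and the plane $345$ does not contain the line $12$), then the three lines joining $1$ to $\langle p\rangle$, $2$ to $\langle q\rangle$, and $3$ to $\langle r\rangle$ pass through a common point if and only if $[0125][0234][1345]-[0124][2345][0135]=0$.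
   Context: For vectors $a,b,c,d\in\mathbb{C}^4$, $[abcd]$ is the determinant of the $4\times4$ matrix with columns $a,b,c,d$; for point labels, $[ijkl]$ means $[v_iv_jv_kv_l]$. For a nonzero vector $v$, $\langle v\rangle$ denotes the corresponding point of $\mathbb{P}^3$. A line $ij$ is the line through points $i,j$; a plane $ijk$ is the plane through three non-collinear points. *)

(* C^4 is modelled as column vectors 'cV[R[i]]_4, where
   R : realType (so R[i] = complex R is the field of complex numbers). *)
From HB Require Import structures.
From mathcomp Require Import all_boot all_order all_algebra.
From mathcomp Require Import complex.
From mathcomp Require Import reals.
Set Implicit Arguments. Unset Strict Implicit. Unset Printing Implicit Defensive.
Import Order.TTheory GRing.Theory Num.Theory.
Local Open Scope ring_scope.

Definition det4 {F : comRingType} (a b c d : 'cV[F]_4) : F :=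
  \det (\matrix_(i < 4, j < 4) (nth 0 [:: a; b; c; d] j) i 0).

(* x (a vector) lies in the linear span of a and b, i.e. the point <x> lies
   on the projective line joining <a> and <b> (when a, b are independent). *)
Definition on_line {F : fieldType} (x a b : 'cV[F]_4) : Prop :=
  exists s t : F, x = s *: a + t *: b.

Definition concurrent3 {F : fieldType} (a1 b1 a2 b2 a3 b3 : 'cV[F]_4) : Prop :=
  exists x : 'cV[F]_4, x != 0 /\ on_line x a1 b1 /\ on_line x a2 b2 /\ on_line x a3 b3.

From HB Require Import structures.
From mathcomp Require Import all_boot all_order all_algebra ring.
From mathcomp Require Import complex reals.
Import GRing.Theory.
Local Open Scope ring_scope.

(* Since p, q, r lie in the plane spanned by v1, v2, v3, each bracket of the
   identity is a multiple of [0123], which turns the identity into polynomial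
   arithmetic.  In the projective coordinates given by v1, v2, v3 on that
   plane, the three lines are the cevians of the triangle v1 v2 v3 through
   p = (0, -[0135], [0125]), q = (-[0234], 0, -[0124]) and
   r = (-[2345], [1345], 0).  By the projective form of Ceva's theorem, the
   cevians through (0, b1, c1), (a2, 0, c2), (a3, b3, 0) concur iff
   b1 c2 a3 = c1 a2 b3: the determinant of their three line equations is the
   difference of the two products.  Here that condition reads D = 0. *)

(* Entries addressed by natural numbers, so that expanded determinants mention
   the same atoms whatever ordinal terms the expansion produced. *)
Definition mxe {F : Type} {m n} (A : 'M[F]_(m.+1, n.+1)) (i j : nat) : F :=
  A (inord i) (inord j).
Arguments mxe {F m n} A i%_N j%_N.

Lemma mxeE {F : Type} {m n} (A : 'M[F]_(m.+1, n.+1)) i j : A i j = mxe A i j.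
Proof. by rewrite /mxe !inord_val. Qed.

Lemma det_mx3E (F : comNzRingType) (A : 'M[F]_3) :
  \det A = mxe A 0 0 * (mxe A 1 1 * mxe A 2 2 - mxe A 1 2 * mxe A 2 1)
         - mxe A 0 1 * (mxe A 1 0 * mxe A 2 2 - mxe A 1 2 * mxe A 2 0)
         + mxe A 0 2 * (mxe A 1 0 * mxe A 2 1 - mxe A 1 1 * mxe A 2 0).
Proof.
rewrite (expand_det_row _ ord0) !big_ord_recl big_ord0 /cofactor.
rewrite !(expand_det_row _ ord0) !big_ord_recl !big_ord0 /cofactor.
by rewrite !det_mx11 !mxE !mxeE /=; ring.
Qed.

Lemma det4E (F : comNzRingType) (a b c d : 'cV[F]_4) :
  let x i (v : 'cV[F]_4) := mxe v i 0 in
  det4 a b c d =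
    x 0 a * x 1 b * x 2 c * x 3 d - x 0 a * x 1 b * x 3 c * x 2 d
  - x 0 a * x 2 b * x 1 c * x 3 d + x 0 a * x 2 b * x 3 c * x 1 d
  + x 0 a * x 3 b * x 1 c * x 2 d - x 0 a * x 3 b * x 2 c * x 1 d
  - x 1 a * x 0 b * x 2 c * x 3 d + x 1 a * x 0 b * x 3 c * x 2 d
  + x 1 a * x 2 b * x 0 c * x 3 d - x 1 a * x 2 b * x 3 c * x 0 d
  - x 1 a * x 3 b * x 0 c * x 2 d + x 1 a * x 3 b * x 2 c * x 0 d
  + x 2 a * x 0 b * x 1 c * x 3 d - x 2 a * x 0 b * x 3 c * x 1 d
  - x 2 a * x 1 b * x 0 c * x 3 d + x 2 a * x 1 b * x 3 c * x 0 d
  + x 2 a * x 3 b * x 0 c * x 1 d - x 2 a * x 3 b * x 1 c * x 0 d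
  - x 3 a * x 0 b * x 1 c * x 2 d + x 3 a * x 0 b * x 2 c * x 1 d
  + x 3 a * x 1 b * x 0 c * x 2 d - x 3 a * x 1 b * x 2 c * x 0 d
  - x 3 a * x 2 b * x 0 c * x 1 d + x 3 a * x 2 b * x 1 c * x 0 d.
Proof.
rewrite /= /det4; set M := \matrix_(i, j) _.
have ME i j : M i j = nth 0 [:: a; b; c; d] j i 0 by rewrite mxE.
(* hiding the body of M keeps mxE off the large matrix *)
clearbody M.
rewrite (expand_det_row _ ord0) !big_ord_recl big_ord0 /cofactor !det_mx3E.
rewrite /mxe !mxE !ME /= !inordK //= !mxeE /= !inordK //=.
ring.
Qed.

Lemma cevian_det4_identity (F : comNzRingType) (v0 v1 v2 v3 : 'cV[F]_4)
    (a b c e f g : F) :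
  let p := a *: v3 - b *: v2 in
  let q := - c *: v3 - e *: v1 in
  let r := f *: v2 - g *: v1 in
  - det4 v1 v0 v2 q * det4 v0 p v3 r + det4 p v0 v2 q * det4 v0 v1 v3 r
  = det4 v0 v1 v2 v3 ^+ 2 * (a * e * f - c * g * b).
Proof.
move=> p q r.
have -> : det4 v1 v0 v2 q = c * det4 v0 v1 v2 v3.
  by rewrite /q !det4E /mxe /= !mxE; ring.
have -> : det4 v0 p v3 r = b * g * det4 v0 v1 v2 v3.
  by rewrite /p /r !det4E /mxe /= !mxE; ring.
have -> : det4 p v0 v2 q = - (a * e * det4 v0 v1 v2 v3).
  by rewrite /p /q !det4E /mxe /= !mxE; ring.
have -> : det4 v0 v1 v3 r = - (f * det4 v0 v1 v2 v3).
  by rewrite /r !det4E /mxe /= !mxE; ring.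
ring.
Qed.

Section ProjectivePlane.
Context {F : fieldType}.

Definition free3 {n} (v1 v2 v3 : 'cV[F]_n) : Prop :=
  forall y1 y2 y3 : F,
    y1 *: v1 + y2 *: v2 + y3 *: v3 = 0 -> [/\ y1 = 0, y2 = 0 & y3 = 0].

Lemma free3_rotl {n} {v1 v2 v3 : 'cV[F]_n} : free3 v1 v2 v3 -> free3 v2 v3 v1.
Proof.
by move=> free_v y2 y3 y1; rewrite addrC addrA => /free_v [-> -> ->].
Qed.

Lemma det4_free3 {v0 v1 v2 v3 : 'cV[F]_4} :
  det4 v0 v1 v2 v3 != 0 -> free3 v1 v2 v3.
Proof.
move=> d_neq0 y1 y2 y3 comb0.
(* Cramer's rule: substituting the combination for v_k multiplies [0123] by y_k. *)
split; apply: (mulIf d_neq0); rewrite mul0r.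
- transitivity (det4 v0 (y1 *: v1 + y2 *: v2 + y3 *: v3) v2 v3).
    by rewrite !det4E /mxe /= !mxE; ring.
  by rewrite comb0 det4E /mxe /= !mxE; ring.
- transitivity (det4 v0 v1 (y1 *: v1 + y2 *: v2 + y3 *: v3) v3).
    by rewrite !det4E /mxe /= !mxE; ring.
  by rewrite comb0 det4E /mxe /= !mxE; ring.
- transitivity (det4 v0 v1 v2 (y1 *: v1 + y2 *: v2 + y3 *: v3)).
    by rewrite !det4E /mxe /= !mxE; ring.
  by rewrite comb0 det4E /mxe /= !mxE; ring.
Qed.

Lemma cross0_proportional {b c y2 y3 : F} :
  (b, c) != (0, 0) -> c * y2 = b * y3 -> exists t, y2 = t * b /\ y3 = t * c.
Proof.
case: (eqVneq b 0) => [-> | b_neq0] bc_neq0 cross0.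
  have c_neq0 : c != 0 by apply: contraNneq bc_neq0 => ->.
  exists (y3 / c); rewrite mulr0 divfK //; split=> //.
  by apply: (mulfI c_neq0); rewrite cross0 !mul0r mulr0.
exists (y2 / b); rewrite divfK //; split=> //.
by apply: (mulfI b_neq0); rewrite -cross0; field.
Qed.

Lemma on_line_comb3 {v1 v2 v3 : 'cV[F]_4} {y1 y2 y3 b c : F} :
  free3 v1 v2 v3 -> b *: v2 + c *: v3 != 0 ->
  on_line (y1 *: v1 + y2 *: v2 + y3 *: v3) v1 (b *: v2 + c *: v3)
  <-> c * y2 = b * y3.
Proof.
move=> free_v bc_neq0; split=> [[s [t y_st]] | cross0].
  have /free_v [_ /subr0_eq -> /subr0_eq ->] :
      (y1 - s) *: v1 + (y2 - t * b) *: v2 + (y3 - t * c) *: v3 = 0.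
    transitivity
      (y1 *: v1 + y2 *: v2 + y3 *: v3 - (s *: v1 + t *: (b *: v2 + c *: v3))).
      by apply/matrixP => i j; rewrite !mxE; ring.
    by rewrite y_st subrr.
  ring.
have [|t [-> ->]] := cross0_proportional _ cross0.
  by apply: contra_neq bc_neq0 => -[-> ->]; rewrite !scale0r addr0.
by exists y1, t; apply/matrixP => i j; rewrite !mxE; ring.
Qed.

Definition mx3 (A : seq (seq F)) : 'M[F]_3 := \matrix_(i, j) nth 0 (nth [::] A i) j.

Definition row3 (y1 y2 y3 : F) : 'rV[F]_3 := \row_j nth 0 [:: y1; y2; y3] j.

Lemma row3_eta (y : 'rV[F]_3) :
  y = row3 (y 0 (inord 0)) (y 0 (inord 1)) (y 0 (inord 2)).
Proof.
apply/rowP => -[[|[|[|//]]] lt_j3]; rewrite !mxE /=; congr (y 0 _);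
  by apply: val_inj; rewrite /= inordK.
Qed.

Lemma row3_eq0 (y1 y2 y3 : F) : (row3 y1 y2 y3 == 0) = ((y1, y2, y3) == (0, 0, 0)).
Proof.
apply/eqP/eqP => [/rowP y0 | [-> -> ->]].
  have := y0 0; have := y0 (inord 1); have := y0 (inord 2).
  by rewrite !mxE !inordK //= => -> -> ->.
by apply/rowP => -[[|[|[|//]]] ?]; rewrite !mxE.
Qed.

Lemma row3_mul_mx3 (y1 y2 y3 : F) (A : seq (seq F)) (j : 'I_3) :
  (row3 y1 y2 y3 *m mx3 A) 0 j
  = y1 * nth 0 (nth [::] A 0) j + y2 * nth 0 (nth [::] A 1) j
    + y3 * nth 0 (nth [::] A 2) j.
Proof. by rewrite !mxE !big_ord_recl big_ord0 !mxE addr0 addrA. Qed.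

Lemma ceva_kernelP (b1 c1 a2 c2 a3 b3 : F) :
  (exists y1 y2 y3 : F, (y1, y2, y3) != (0, 0, 0) /\
     [/\ c1 * y2 = b1 * y3, a2 * y3 = c2 * y1 & b3 * y1 = a3 * y2])
  <-> b1 * c2 * a3 = c1 * a2 * b3.
Proof.
pose A := mx3 [:: [:: 0; - c2; b3]; [:: c1; 0; - a3]; [:: - b1; a2; 0]].
have detA : \det A = c1 * a2 * b3 - b1 * c2 * a3.
  by rewrite det_mx3E /A /mxe !mxE !inordK //=; ring.
have kerA y1 y2 y3 : row3 y1 y2 y3 *m A = 0 <->
    [/\ c1 * y2 = b1 * y3, a2 * y3 = c2 * y1 & b3 * y1 = a3 * y2].
  split=> [/rowP yA | [e1 e2 e3]].
    have := yA 0; have := yA (inord 1); have := yA (inord 2).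
    rewrite !row3_mul_mx3 !inordK //= !mxE => E3 E2 E1.
    by split; apply/eqP; rewrite -subr_eq0; apply/eqP;
      [rewrite -E1 | rewrite -E2 | rewrite -E3]; ring.
  apply/rowP => -[[|[|[|//]]] lt_j3]; rewrite row3_mul_mx3 mxE /=.
  - by transitivity (c1 * y2 - b1 * y3); [ring | rewrite e1 subrr].
  - by transitivity (a2 * y3 - c2 * y1); [ring | rewrite e2 subrr].
  - by transitivity (b3 * y1 - a3 * y2); [ring | rewrite e3 subrr].
have -> : (b1 * c2 * a3 = c1 * a2 * b3) <-> \det A == 0.
  by rewrite detA subr_eq0; split => [->|/eqP].
split=> [[y1 [y2 [y3 [nz /kerA yA]]]] | /det0P [y nz yA]].
  by apply/det0P; exists (row3 y1 y2 y3); rewrite ?row3_eq0.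
move: nz yA; rewrite (row3_eta y) row3_eq0 => nz /kerA yA.
by do 3 eexists; split; first exact: nz.
Qed.

Lemma concurrent3_ceva {v1 v2 v3 : 'cV[F]_4} {b1 c1 a2 c2 a3 b3 : F} :
  free3 v1 v2 v3 ->
  b1 *: v2 + c1 *: v3 != 0 -> a2 *: v1 + c2 *: v3 != 0 ->
  a3 *: v1 + b3 *: v2 != 0 ->
  concurrent3 v1 (b1 *: v2 + c1 *: v3) v2 (a2 *: v1 + c2 *: v3)
              v3 (a3 *: v1 + b3 *: v2)
  <-> b1 * c2 * a3 = c1 * a2 * b3.
Proof.
move=> free_v nz1 nz2 nz3.
have rot (u1 u2 u3 : 'cV[F]_4) : u1 + u2 + u3 = u2 + u3 + u1 by rewrite [RHS]addrC addrA.
have on_lines y1 y2 y3 (x := y1 *: v1 + y2 *: v2 + y3 *: v3) :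
  [/\ on_line x v1 (b1 *: v2 + c1 *: v3) <-> c1 * y2 = b1 * y3,
      on_line x v2 (a2 *: v1 + c2 *: v3) <-> a2 * y3 = c2 * y1
    & on_line x v3 (a3 *: v1 + b3 *: v2) <-> b3 * y1 = a3 * y2].
  rewrite {}/x; split; first exact: on_line_comb3.
    rewrite rot [a2 *: v1 + _]addrC; apply: on_line_comb3 (free3_rotl free_v) _.
    by rewrite addrC.
  rewrite rot rot; apply: on_line_comb3 (free3_rotl (free3_rotl free_v)) nz3.
split=> [[x [x_neq0 [[s [t x_def]] [on2 on3]]]] | /ceva_kernelP].
  have x_comb : x = s *: v1 + (t * b1) *: v2 + (t * c1) *: v3.
    by rewrite x_def scalerDr !scalerA addrA.
  have [_ L2 L3] := on_lines s (t * b1) (t * c1).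
  apply/ceva_kernelP; exists s, (t * b1), (t * c1); split.
    apply: contra_neq x_neq0 => -[s0 tb0 tc0].
    by rewrite x_comb s0 tb0 tc0 !scale0r !addr0.
  by split; [ring | apply/L2; rewrite -x_comb | apply/L3; rewrite -x_comb].
move=> [y1 [y2 [y3 [y_neq0 [e1 e2 e3]]]]].
have [L1 L2 L3] := on_lines y1 y2 y3.
exists (y1 *: v1 + y2 *: v2 + y3 *: v3); split.
  by apply: contra_neq y_neq0 => /free_v [-> -> ->].
by split; [apply/L1 | split; [apply/L2 | apply/L3]].
Qed.

End ProjectivePlane.

Theorem lemma3p1 (R : realType) (v0 v1 v2 v3 v4 v5 : 'cV[R[i]]_4) :
  v0 != 0 -> v1 != 0 -> v2 != 0 -> v3 != 0 -> v4 != 0 -> v5 != 0 ->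
  det4 v0 v1 v2 v3 != 0 ->
  let p := det4 v0 v1 v2 v5 *: v3 - det4 v0 v1 v3 v5 *: v2 in
  let q := - det4 v0 v1 v2 v4 *: v3 - det4 v0 v2 v3 v4 *: v1 in
  let r := det4 v1 v3 v4 v5 *: v2 - det4 v2 v3 v4 v5 *: v1 in
  let D := det4 v0 v1 v2 v5 * det4 v0 v2 v3 v4 * det4 v1 v3 v4 v5
           - det4 v0 v1 v2 v4 * det4 v2 v3 v4 v5 * det4 v0 v1 v3 v5 in
  (- det4 v1 v0 v2 q * det4 v0 p v3 r + det4 p v0 v2 q * det4 v0 v1 v3 r
     = det4 v0 v1 v2 v3 ^+ 2 * D)
  /\ (p != 0 -> q != 0 -> r != 0 ->
      (concurrent3 v1 p v2 q v3 r <-> D = 0)).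
Proof.
move=> _ _ _ _ _ _ d_neq0.
set a := det4 v0 v1 v2 v5; set b := det4 v0 v1 v3 v5; set c := det4 v0 v1 v2 v4.
set e := det4 v0 v2 v3 v4; set f := det4 v1 v3 v4 v5; set g := det4 v2 v3 v4 v5.
move=> p q r D; split; first exact: cevian_det4_identity.
have -> : p = - b *: v2 + a *: v3 by rewrite /p addrC scaleNr.
have -> : q = - e *: v1 + - c *: v3 by rewrite /q addrC !scaleNr.
have -> : r = - g *: v1 + f *: v2 by rewrite /r addrC scaleNr.
move=> p_neq0 q_neq0 r_neq0.
apply: iff_trans (concurrent3_ceva (det4_free3 d_neq0) p_neq0 q_neq0 r_neq0) _.
have -> : D = - b * - c * - g - a * - e * f by rewrite /D; ring.
by split=> [-> | /subr0_eq]; first exact: subrr.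
Qed.
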